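(* Let $\Re$ be a commutative Krasner hyperring with identity $1\ne0$, $\phi:L(\Re)\to L(\Re)\cup\{\emptyset\}$ a function, and $T$ a $\phi$-prime proper hyperideal of $\Re$. (i) If $M$ is a hyperideal of $\Re$ with $M\subseteq T$, then $T/M$ is a $\phi_M$-prime hyperideal of $\Re/M$. (ii) If $S$ is a multiplicatively closed subset of $\Re$ with $T\cap S=\emptyset$ and $\phi(T)_S\subseteq\phi_S(T_S)$, then $T_S$ is a $\phi_S$-prime hyperideal of $\Re_S$.
   Context: Krasner hyperring: $(\Re,\oplus)$ canonical hypergroup, $(\Re,\circ)$ commutative semigroup with identity $1\ne0$, $0$ absorbing, distributive. Hyperideals, $L(\Re)$ as usual. For a hyperideal $M$, $\Re/M=\{a\oplus M\}$ is the quotient Krasner hyperring, and for a hyperideal $N\supseteq M$, $N/M=\{a\oplus M: a\in N\}$; $\phi_M:L(\Re/M)\to L(\Re/M)\cup\{\emptyset\}$ is $\phi_M(N/M)=(\phi(N)\oplus M)/M$, and $\emptyset$ if $\phi(N)=\emptyset$. For multiplicatively closed $S$ ($1\in S$, closed under $\circ$), $\Re_S$ is the localization (fractions $a/s$), $N_S=\{a/s: a\in N,s\in S\}$; for $J\in L(\Re_S)$, $J\cap\Re=\{a\in\Re: a/1\in J\}$ and $\phi_S(J)=(\phi(J\cap\Re))_S$, with $\phi_S(J)=\emptyset$ if $\phi(J\cap\Re)=\emptyset$. A hyperideal $N$ is $\psi$-prime if $a\circ b\in N$, $a\circ b\notin\psi(N)$ imply $a\in N$ or $b\in N$. *)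

From Stdlib Require Import ClassicalEpsilon.
Set Implicit Arguments.

(** * Raw (hyper)ring data: a carrier, a hyperaddition given as a ternary
    relation ([hadd x y z] means z ∈ x ⊕ y), zero, additive inverse,
    multiplication, one.  Sets are predicates [car -> Prop]. *)
Record hdata := HData {
  car  : Type;
  hadd : car -> car -> car -> Prop;
  hzero : car;
  hneg : car -> car;
  hmul : car -> car -> car;
  hone : car
}.

Section Basic.
Variable H : hdata.
Local Notation R := (car H).
Local Notation "x * y" := (hmul H x y).

Definition is_krasner : Prop :=
  (forall x y : R, exists z, hadd H x y z) /\
  (forall x y z w : R,
     (exists u, hadd H x y u /\ hadd H u z w) <->
     (exists v, hadd H y z v /\ hadd H x v w)) /\
  (forall x y z : R, hadd H x y z <-> hadd H y x z) /\
  (forall x y : R, hadd H (hzero H) x y <-> y = x) /\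
  (forall x : R, hadd H x (hneg H x) (hzero H)) /\
  (forall x y : R, hadd H x y (hzero H) -> y = hneg H x) /\
  (forall x y z : R, hadd H x y z ->
     hadd H (hneg H x) z y /\ hadd H z (hneg H y) x) /\
  (forall x y z : R, x * (y * z) = (x * y) * z) /\
  (forall x y : R, x * y = y * x) /\
  (forall x : R, hone H * x = x) /\
  hone H <> hzero H /\
  (forall x : R, hzero H * x = hzero H) /\
  (* distributivity: x ∘ (y ⊕ z) = x∘y ⊕ x∘z *)
  (forall x y z w : R,
     hadd H (x * y) (x * z) w <-> exists v, hadd H y z v /\ w = x * v).

Definition hyperideal (I : R -> Prop) : Prop :=
  (exists x, I x) /\
  (forall a b c, I a -> I b -> hadd H a (hneg H b) c -> I c) /\
  (forall r a, I a -> I (r * a)).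

Definition proper (I : R -> Prop) : Prop := exists x, ~ I x.

Definition psi_prime (psi : (R -> Prop) -> (R -> Prop)) (N : R -> Prop) : Prop :=
  hyperideal N /\
  (forall a b : R, N (a * b) -> ~ psi N (a * b) -> N a \/ N b).

(** phi : L(R) -> L(R) ∪ {∅} (∅ is the empty predicate) *)
Definition phi_fun (phi : (R -> Prop) -> (R -> Prop)) : Prop :=
  forall N, hyperideal N -> hyperideal (phi N) \/ (forall x, ~ phi N x).

Record mcset := MCSet {
  mcS :> R -> Prop;
  mc1 : mcS (hone H);
  mcM : forall x y, mcS x -> mcS y -> mcS (x * y)
}.

End Basic.

Arguments is_krasner : clear implicits.
Arguments hyperideal : clear implicits.
Arguments proper : clear implicits.
Arguments psi_prime : clear implicits.
Arguments phi_fun : clear implicits.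

Section Quotient.
Variables (H : hdata) (M : car H -> Prop).
Local Notation R := (car H).
Local Notation "x * y" := (hmul H x y).

Definition coset (a : R) : R -> Prop :=
  fun x => exists m, M m /\ hadd H a m x.

Definition qcar : Type := { X : R -> Prop | exists a, X = coset a }.

Definition qcls (a : R) : qcar := exist _ (coset a) (ex_intro _ a eq_refl).

Definition qrep (X : qcar) : R :=
  proj1_sig (constructive_indefinite_description _ (proj2_sig X)).

(** (a⊕M) ⊕ (b⊕M) = { c⊕M : c ∈ a⊕b },  -(a⊕M) = (-a)⊕M,
    (a⊕M)∘(b⊕M) = (a∘b)⊕M, zero 0⊕M = M, one 1⊕M *)
Definition quotient : hdata :=
  @HData qcar
    (fun X Y Z => exists c, hadd H (qrep X) (qrep Y) c /\ Z = qcls c)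
    (qcls (hzero H))
    (fun X => qcls (hneg H (qrep X)))
    (fun X Y => qcls (qrep X * qrep Y))
    (qcls (hone H)).

Definition qideal (N : R -> Prop) : qcar -> Prop :=
  fun X => exists a, N a /\ X = qcls a.

(** phi_M (N/M) = (phi(N) ⊕ M)/M  (which is ∅ when phi(N) = ∅);
    N is recovered from J = N/M as {a | a⊕M ∈ J}. *)
Definition phiM (phi : (R -> Prop) -> (R -> Prop)) (J : qcar -> Prop)
  : qcar -> Prop :=
  let N := fun a => J (qcls a) in
  qideal (fun c => exists p m, phi N p /\ M m /\ hadd H p m c).

End Quotient.

Section Localization.
Variables (H : hdata) (S : mcset H).
Local Notation R := (car H).
Local Notation "x * y" := (hmul H x y).

(** the fraction a/s, i.e. the class of (a,s) under
    (a,s) ~ (b,t)  iff  u∘a∘t = u∘b∘s for some u ∈ S *)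
Definition frac (a s : R) : R * R -> Prop :=
  fun p => S (snd p) /\ exists u, S u /\ u * (a * snd p) = u * (fst p * s).

Definition lcar : Type :=
  { X : R * R -> Prop | exists a s, S s /\ X = frac a s }.

Definition lcls (a s : R) (Hs : S s) : lcar :=
  exist _ (frac a s) (ex_intro _ a (ex_intro _ s (conj Hs eq_refl))).

Definition lrep_sig (X : lcar) : { p : R * R | S (snd p) /\ proj1_sig X = frac (fst p) (snd p) } :=
  let e := constructive_indefinite_description _ (proj2_sig X) in
  let f := constructive_indefinite_description _ (proj2_sig e) in
  exist _ (proj1_sig e, proj1_sig f) (proj2_sig f).

Definition lrep (X : lcar) : R * R := proj1_sig (lrep_sig X).

Definition lrep_S (X : lcar) : S (snd (lrep X)) := proj1 (proj2_sig (lrep_sig X)).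

(** a/s ⊕ b/t = { c/(st) : c ∈ a∘t ⊕ b∘s }, -(a/s) = (-a)/s,
    (a/s)(b/t) = (ab)/(st), zero 0/1, one 1/1 *)
Definition localization : hdata :=
  @HData lcar
    (fun X Y Z =>
       exists c, hadd H (fst (lrep X) * snd (lrep Y)) (fst (lrep Y) * snd (lrep X)) c
                 /\ proj1_sig Z = frac c (snd (lrep X) * snd (lrep Y)))
    (@lcls (hzero H) (hone H) (mc1 S))
    (fun X => @lcls (hneg H (fst (lrep X))) (snd (lrep X)) (lrep_S X))
    (fun X Y => @lcls (fst (lrep X) * fst (lrep Y)) (snd (lrep X) * snd (lrep Y))
                  (@mcM H S _ _ (lrep_S X) (lrep_S Y)))
    (@lcls (hone H) (hone H) (mc1 S)).

Definition lideal (N : R -> Prop) : lcar -> Prop :=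
  fun X => exists a s, N a /\ S s /\ proj1_sig X = frac a s.

(** J ∩ R = { a ∈ R : a/1 ∈ J } *)
Definition contract (J : lcar -> Prop) : R -> Prop :=
  fun a => J (@lcls a (hone H) (mc1 S)).

(** phi_S(J) = (phi(J ∩ R))_S  (which is ∅ when phi(J ∩ R) = ∅) *)
Definition phiS (phi : (R -> Prop) -> (R -> Prop)) (J : lcar -> Prop)
  : lcar -> Prop :=
  lideal (phi (contract J)).

End Localization.

Arguments quotient : clear implicits.
Arguments qideal : clear implicits.
Arguments phiM : clear implicits.
Arguments localization : clear implicits.
Arguments lideal : clear implicits.
Arguments phiS : clear implicits.
Arguments mcset : clear implicits.

(* Membership in T/M and in T_S can be read off representatives: since M ⊆ T,
   a ⊕ M lies in T/M iff a ∈ T, and a/s lies in T_S iff w∘a ∈ T for some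
   w ∈ S.  A product of classes is the class of the product of representatives,
   so the φ-prime property of T transfers to the class of a product.  The
   exceptional case a∘b ∈ φ(T) is excluded upstairs because the class of
   φ(T) lies in φ_M(T/M) = (φ(T) ⊕ M)/M, resp. in φ(T)_S ⊆ φ_S(T_S). *)
From Stdlib Require Import ClassicalEpsilon FunctionalExtensionality PropExtensionality ProofIrrelevance.

Section Krasner.
Context {H : hdata} (HK : is_krasner H).
Local Notation R := (car H).
Local Notation "x * y" := (hmul H x y).

Lemma hadd_comm x y z : hadd H x y z -> hadd H y x z.
Proof. destruct HK as (_ & _ & comm & _). apply comm. Qed.

Lemma hadd0l x : hadd H (hzero H) x x.
Proof. destruct HK as (_ & _ & _ & zero & _). now apply zero. Qed.

Lemma hadd0r x : hadd H x (hzero H) x.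
Proof. apply hadd_comm, hadd0l. Qed.

Lemma hadd_hneg x : hadd H x (hneg H x) (hzero H).
Proof. destruct HK as (_ & _ & _ & _ & inv & _). apply inv. Qed.

Lemma hneg_involutive x : hneg H (hneg H x) = x.
Proof.
  destruct HK as (_ & _ & _ & _ & _ & inv_uniq & _).
  symmetry; apply inv_uniq, hadd_comm, hadd_hneg.
Qed.

Lemma hmulA x y z : x * (y * z) = (x * y) * z.
Proof. destruct HK as (_ & _ & _ & _ & _ & _ & _ & assoc & _). apply assoc. Qed.

Lemma hmulC x y : x * y = y * x.
Proof. destruct HK as (_ & _ & _ & _ & _ & _ & _ & _ & comm & _). apply comm. Qed.

Lemma hmulCA x y z : x * (y * z) = y * (x * z).
Proof. now rewrite hmulA, (hmulC x y), <- hmulA. Qed.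

Lemma hmul_hadd x {y z v} : hadd H y z v -> hadd H (x * y) (x * z) (x * v).
Proof.
  destruct HK as (_ & _ & _ & _ & _ & _ & _ & _ & _ & _ & _ & _ & distr).
  intro Hv; apply distr; now exists v.
Qed.

Lemma hmul_hneg x y : x * hneg H y = hneg H (x * y).
Proof.
  destruct HK as (_ & _ & _ & _ & _ & inv_uniq & _ & _ & _ & _ & _ & absorb & _).
  apply inv_uniq.
  rewrite <- (absorb x), (hmulC (hzero H)).
  apply hmul_hadd, hadd_hneg.
Qed.

Section Hyperideal.
Context {I : R -> Prop} (HI : hyperideal H I).

Lemma hyperideal0 : I (hzero H).
Proof.
  destruct HI as ((x & Ix) & closed & _).
  exact (closed x x _ Ix Ix (hadd_hneg x)).
Qed.

Lemma hyperidealN x : I x -> I (hneg H x).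
Proof.
  destruct HI as (_ & closed & _); intro Ix.
  exact (closed _ _ _ hyperideal0 Ix (hadd0l _)).
Qed.

Lemma hyperidealD {x y z} : I x -> I y -> hadd H x y z -> I z.
Proof.
  destruct HI as (_ & closed & _); intros Ix Iy Hz.
  apply (closed x (hneg H y)); [exact Ix | now apply hyperidealN |].
  now rewrite hneg_involutive.
Qed.

Lemma hyperidealMl r x : I x -> I (r * x).
Proof. destruct HI as (_ & _ & mul); apply mul. Qed.

Lemma hyperidealMr r x : I x -> I (x * r).
Proof. rewrite hmulC; apply hyperidealMl. Qed.

End Hyperideal.

Section Quotient.
Context {M T : R -> Prop} (HM : hyperideal H M) (HT : hyperideal H T).
Context (MT : forall x, M x -> T x).

Lemma qcls_qrep X : qcls H M (qrep X) = X.
Proof.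
  destruct X as [X HX]; unfold qrep, qcls; simpl.
  destruct (constructive_indefinite_description _ _) as [a ->]; simpl.
  f_equal; apply proof_irrelevance.
Qed.

Lemma qcls_eq_mem {x y} : qcls H M x = qcls H M y -> T y -> T x.
Proof.
  intros Exy Ty.
  assert (Hx : coset H M x x)
    by (exists (hzero H); split; [exact (hyperideal0 HM) | apply hadd0r]).
  apply (f_equal (@proj1_sig _ _)) in Exy; simpl in Exy.
  rewrite Exy in Hx; destruct Hx as (m & Mm & Hm).
  exact (hyperidealD HT Ty (MT _ Mm) Hm).
Qed.

Lemma qideal_qcls a : qideal H M T (qcls H M a) <-> T a.
Proof.
  split.
  - intros (b & Tb & Eab); exact (qcls_eq_mem Eab Tb).
  - intro Ta; now exists a.
Qed.

Lemma qideal_qrep X : qideal H M T X <-> T (qrep X).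
Proof. rewrite <- qideal_qcls, qcls_qrep; reflexivity. Qed.

Lemma qideal_contract : (fun a => qideal H M T (qcls H M a)) = T.
Proof.
  extensionality a; apply propositional_extensionality, qideal_qcls.
Qed.

Lemma hyperideal_qideal : hyperideal (quotient H M) (qideal H M T).
Proof.
  split; [| split].
  - destruct HT as ((x & Tx) & _); exists (qcls H M x); now apply qideal_qcls.
  - intros A B C HA HB (c & Hc & ->); apply qideal_qcls.
    apply (hyperidealD HT (proj1 (qideal_qrep A) HA)) with (2 := Hc).
    apply qideal_qrep, qideal_qcls, hyperidealN, qideal_qrep; auto.
  - intros X A HA; apply qideal_qcls, hyperidealMl, qideal_qrep; auto.
Qed.

Lemma psi_prime_qideal {phi} : psi_prime H phi T ->
  psi_prime (quotient H M) (phiM H M phi) (qideal H M T).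
Proof.
  intros [_ prime]; split; [exact hyperideal_qideal |].
  intros A B HAB Hphi; simpl in HAB, Hphi.
  rewrite !qideal_qrep; apply qideal_qcls in HAB.
  apply prime; [exact HAB |]; intro Hab; apply Hphi.
  exists (qrep A * qrep B); split; [| reflexivity].
  exists (qrep A * qrep B), (hzero H).
  rewrite qideal_contract.
  split; [exact Hab | split; [exact (hyperideal0 HM) | apply hadd0r]].
Qed.

End Quotient.

Section Localization.
Context {S : mcset H} {T : R -> Prop} (HT : hyperideal H T).

Lemma frac_refl a s : S s -> frac S a s (a, s).
Proof. intro Ss; split; [exact Ss |]; exists (hone H); split; [apply mc1 | reflexivity]. Qed.

Lemma lrep_frac (X : lcar S) : proj1_sig X = frac S (fst (lrep X)) (snd (lrep X)).
Proof. exact (proj2 (proj2_sig (lrep_sig X))). Qed.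

Lemma frac_scale w a s : S w -> frac S a s = frac S (w * a) (w * s).
Proof.
  intro Sw; extensionality p; apply propositional_extensionality.
  unfold frac; split; intros [Sp (u & Su & Eu)]; split; auto.
  - exists u; split; [exact Su |].
    now rewrite <- (hmulA w a), (hmulCA u w), (hmulCA (fst p) w), (hmulCA u w), Eu.
  - exists (u * w); split; [now apply mcM |].
    rewrite <- (hmulA w a), (hmulCA (fst p) w) in Eu.
    now rewrite <- !hmulA.
Qed.

Lemma lideal_of_num {P : R -> Prop} {X : lcar S} {w} a s :
  S w -> S s -> proj1_sig X = frac S a s -> P (w * a) -> lideal H S P X.
Proof.
  intros Sw Ss EX Pwa; exists (w * a), (w * s).
  split; [exact Pwa | split; [now apply mcM |]].
  rewrite EX; now apply frac_scale.
Qed.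

Lemma lideal_num {X : lcar S} {a s} :
  lideal H S T X -> proj1_sig X = frac S a s -> S s -> exists w, S w /\ T (w * a).
Proof.
  intros (b & t & Tb & St & EX) EX' Ss.
  assert (Hbt : frac S b t (a, s)) by (rewrite <- EX, EX'; now apply frac_refl).
  destruct Hbt as [_ (u & Su & Eu)]; simpl in Eu.
  exists (u * t); split; [now apply mcM |].
  rewrite <- hmulA, (hmulC t a), <- Eu.
  now apply hyperidealMl, hyperidealMr.
Qed.

Lemma lideal_lrep {X : lcar S} : lideal H S T X -> exists w, S w /\ T (w * fst (lrep X)).
Proof. intro HX; exact (lideal_num HX (lrep_frac X) (lrep_S X)). Qed.

Lemma hyperideal_lideal : hyperideal (localization H S) (lideal H S T).
Proof.
  split; [| split].
  - destruct HT as ((x & Tx) & _).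
    exists (@lcls H S x (hone H) (mc1 S)), x, (hone H); repeat split; auto using mc1.
  - intros A B C HA HB (c & Hc & EC).
    set (nB := hneg (localization H S) B) in *.
    assert (HnB : lideal H S T nB).
    { destruct (lideal_lrep HB) as (w & Sw & Tw).
      apply (lideal_of_num (hneg H (fst (lrep B))) (snd (lrep B)) Sw (lrep_S B)); [reflexivity |].
      rewrite hmul_hneg; now apply hyperidealN. }
    destruct (lideal_lrep HA) as (wA & SwA & TwA).
    destruct (lideal_lrep HnB) as (wB & SwB & TwB).
    apply (lideal_of_num c _ (mcM _ _ _ SwA SwB) (mcM _ _ _ (lrep_S A) (lrep_S nB)) EC).
    refine (hyperidealD HT _ _ (hmul_hadd (wA * wB) Hc)).
    + rewrite <- hmulA, (hmulCA wB), hmulA; now apply hyperidealMr.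
    + rewrite (hmulC wA wB), <- hmulA, (hmulCA wA), hmulA; now apply hyperidealMr.
  - intros X A HA; destruct (lideal_lrep HA) as (w & Sw & Tw).
    apply (lideal_of_num (fst (lrep X) * fst (lrep A)) _ Sw
             (mcM _ _ _ (lrep_S X) (lrep_S A))); [reflexivity |].
    rewrite hmulCA; now apply hyperidealMl.
Qed.

Lemma psi_prime_lideal {phi} : psi_prime H phi T ->
  (forall X, lideal H S (phi T) X -> phiS H S phi (lideal H S T) X) ->
  psi_prime (localization H S) (phiS H S phi) (lideal H S T).
Proof.
  intros [_ prime] phi_loc; split; [exact hyperideal_lideal |].
  intros A B HAB Hphi.
  set (a := fst (lrep A)); set (b := fst (lrep B)).
  pose proof (mcM _ _ _ (lrep_S A) (lrep_S B)) as Sst.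
  destruct (lideal_num (a := a * b) HAB eq_refl Sst) as (w & Sw & Twab).
  rewrite hmulA in Twab.
  destruct (prime _ _ Twab) as [Twa | Tb].
  - intro Hwab; apply Hphi, phi_loc.
    apply (lideal_of_num (a * b) _ Sw Sst); [reflexivity | now rewrite hmulA].
  - left; exact (lideal_of_num a _ Sw (lrep_S A) (lrep_frac A) Twa).
  - right; apply (lideal_of_num b _ Sw (lrep_S B) (lrep_frac B)).
    now apply hyperidealMl.
Qed.

End Localization.

End Krasner.

Theorem mainTheorem10 (H : hdata) (HK : is_krasner H)
  (phi : (car H -> Prop) -> (car H -> Prop)) (Hphi : phi_fun H phi)
  (T : car H -> Prop) (HT : psi_prime H phi T) (HTp : proper H T) :
  (* (i) *)
  (forall M : car H -> Prop, hyperideal H M -> (forall x, M x -> T x) ->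
     psi_prime (quotient H M) (phiM H M phi) (qideal H M T)) /\
  (* (ii) *)
  (forall S : mcset H, (forall x, T x -> ~ S x) ->
     (forall X, lideal H S (phi T) X -> phiS H S phi (lideal H S T) X) ->
     psi_prime (localization H S) (phiS H S phi) (lideal H S T)).
Proof.
  split.
  - intros M HM MT; exact (psi_prime_qideal HK HM (proj1 HT) MT HT).
  - intros S _ phi_loc; exact (psi_prime_lideal HK (proj1 HT) HT phi_loc).
Qed.
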